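(* Let $d,k,m\in\mathbb{N}$ with $2k<m$, and let $N=m\cdot2(k+1)$. Let $\pi:\mathbb{Z}^d\to\mathbb{T}_N^d=\mathbb{Z}^d/(N\mathbb{Z})^d$ be the natural quotient map. Then for every set $\mathcal{S}\subset\mathbb{T}_N^d$ with $|\mathcal{S}|\le k$ there is some $\boldsymbol{v}\in\mathbb{Z}^d$ such that \[\bigcup_{\boldsymbol{t}\in\pi^{-1}(\mathcal{S})\cap(\boldsymbol{v}+[1,N]^d)}\big(\boldsymbol{t}+[-m,m]^d\big)\subset\boldsymbol{v}+[1,N]^d.\]
   Context: $[a,b]$ denotes the integer interval $\{a,a+1,\dots,b\}$ and $[a,b]^d$ its $d$-fold product in $\mathbb{Z}^d$. *)

From mathcomp Require Import all_boot all_order all_algebra.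
Set Implicit Arguments. Unset Strict Implicit. Unset Printing Implicit Defensive.
Import Order.TTheory GRing.Theory Num.Theory.
Local Open Scope ring_scope.

(* Points of Z^d are functions 'I_d -> int. The discrete torus T_N^d is
   {ffun 'I_d -> 'Z_N} (faithful for N >= 2, which holds here). *)
Definition torus (d N : nat) := {ffun 'I_d -> 'Z_N}.

Definition torus_proj (d N : nat) (t : 'I_d -> int) : torus d N :=
  [ffun i => (t i)%:~R].

Definition in_box (d : nat) (v : 'I_d -> int) (a b : int) (x : 'I_d -> int) : Prop :=
  forall i, v i + a <= x i <= v i + b.

(* Cut [0, N) into the k + 1 blocks [2mj, 2m(j+1)).  In each coordinate the
   at most k points of S have their residues in at most k blocks, so some
   block j is free; centring the window v + [1, N] at the middle 2mj + m of
   that block, every lift t of a point of S in the window has its coordinate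
   at distance at least m from both ends of the window. *)

From mathcomp Require Import all_boot all_order all_algebra.
From mathcomp Require Import zify.
Set Implicit Arguments. Unset Strict Implicit. Unset Printing Implicit Defensive.
Import Order.TTheory GRing.Theory Num.Theory.
Local Open Scope ring_scope.

Lemma val_intr_Zp (N : nat) (z : int) : (1 < N)%N ->
  (val (z%:~R : 'Z_N))%:Z = (z %% N)%Z.
Proof.
move=> N_gt1.
have N_gt0 : 0 < N%:Z by rewrite ltz_nat; lia.
have [r Er] : exists r : nat, (z %% N)%Z = r%:Z.
  by exists `|(z %% N)%Z|%N; rewrite gez0_abs // modz_ge0 // gt_eqF.
have r_ltN : (r < N)%N by rewrite -ltz_nat -Er ltz_pmod.
have Nr_eq0 : (N%:R : 'Z_N) = 0 by rewrite pchar_Zp.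
rewrite {1}(divz_eq z N) Er intrD intrM (_ : N%:Z%:~R = N%:R) //.
rewrite Nr_eq0 mulr0 add0r (_ : r%:Z%:~R = r%:R) //.
by congr Posz; apply: etrans (val_Zp_nat N_gt1 r) _; rewrite modn_small.
Qed.

Lemma eq_divn_itv (m d q : nat) : (0 < d)%N ->
  ((m %/ d)%N == q) = (q * d <= m < q * d + d)%N.
Proof.
move=> d_gt0; rewrite -mulSnr; apply/eqP/andP => [<- | [lb ub]].
  by rewrite -leq_divRL // -ltn_divLR.
by apply/eqP; rewrite eqn_leq -ltnS ltn_divLR // ub leq_divRL.
Qed.

Lemma exists_notin_seq (n : nat) (s : seq nat) :
  (size s < n)%N -> exists2 j, (j < n)%N & j \notin s.
Proof.
move=> small_s.
have /hasP [j] : has (fun j => j \notin s) (iota 0 n).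
  apply: contraLR small_s; rewrite -all_predC -leqNgt => /allP iota_sub.
  rewrite -{1}(size_iota 0 n) uniq_leq_size ?iota_uniq // => j /iota_sub.
  by rewrite /= negbK.
by rewrite mem_iota add0n => j_lt j_notin; exists j.
Qed.

Lemma torus_free_block (d N b k : nat) (S : {set torus d N}) (i : 'I_d) :
  (#|S| <= k)%N ->
  exists2 j, (j <= k)%N & forall s, s \in S -> (val (s i) %/ b != j)%N.
Proof.
move=> card_S.
have [|j j_le j_free] :=
  @exists_notin_seq k.+1 [seq (val (s i) %/ b)%N | s : torus d N <- enum S].
  by rewrite size_map -cardE ltnS.
exists j => // s s_S; apply: contraNneq j_free => <-.
by apply: map_f; rewrite mem_enum.
Qed.

Lemma window_margin (N m a t x : int) : 0 <= m -> 0 <= a -> a + 2 * m <= N ->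
  a + m <= t <= a + m + N - 1 -> ~~ (a <= (t %% N)%Z < a + 2 * m) ->
  t - m <= x <= t + m -> a + m <= x <= a + m + N - 1.
Proof.
move=> m_ge0 a_ge0 block_le t_win r_out x_near.
have N_gt0 : 0 < N by lia.
have r_ge0 := modz_ge0 t (lt0r_neq0 N_gt0).
have r_ltN := ltz_pmod t N_gt0.
move: (divz_eq t N) r_out r_ge0 r_ltN.
move: (t %/ N)%Z (t %% N)%Z => q r t_eq.
have [q_lt0|[q0|[q1|q_gt1]]] : q < 0 \/ q = 0 \/ q = 1 \/ 1 < q by lia.
- have : q * N <= - N by nia.
  lia.
- by subst q; lia.
- by subst q; lia.
- have : 2 * N <= q * N by nia.
  lia.
Qed.

Theorem proposition10 (d k m : nat) (Hkm : (2 * k < m)%N)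
  (S : {set torus d (m * (2 * (k + 1)))}) (HS : (#|S| <= k)%N) :
  exists v : 'I_d -> int,
    forall t : 'I_d -> int,
      torus_proj (m * (2 * (k + 1))) t \in S ->
      in_box v 1 (m * (2 * (k + 1)))%N%:Z t ->
      forall x : 'I_d -> int,
        in_box t (- (m%:Z)) m%:Z x ->
        in_box v 1 (m * (2 * (k + 1)))%N%:Z x.
Proof.
set N := (m * (2 * (k + 1)))%N.
have N_gt1 : (1 < N)%N by rewrite /N; nia.
have [J J_le J_free] := fin_all_exists2 (fun i : 'I_d => torus_free_block (2 * m) i HS).
exists (fun i => (J i * (2 * m))%N%:Z + m%:Z - 1) => t t_S t_box x x_near i.
have block_N : (J i * (2 * m) + 2 * m <= N)%N by rewrite /N; have := J_le i; nia.
have := J_free i _ t_S.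
rewrite /torus_proj ffunE eq_divn_itv; last by lia.
move=> r_out; have t_win := t_box i; have x_t := x_near i.
have : (J i * (2 * m))%N%:Z + m <= x i <= (J i * (2 * m))%N%:Z + m + N - 1.
  apply: (window_margin (t := t i)) => //; try lia.
  by rewrite -(val_intr_Zp (t i) N_gt1).
lia.
Qed.
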